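(* Let $X$ be a topological space and $x\in X$. The union of all finitely non-Hausdorff subsets of $X$ that contain $x$ (equivalently, of all maximal finitely non-Hausdorff subsets of $X$ that contain $x$) is a closed set in $X$.
   Context: A non-empty subset $A$ of $X$ is finitely non-Hausdorff if for every non-empty finite $F\subseteq A$ and every family $\{U_y:y\in F\}$ of open neighborhoods $U_y$ of $y$, $\bigcap_{y\in F}U_y\neq\emptyset$; it is maximal finitely non-Hausdorff if no finitely non-Hausdorff subset of $X$ properly contains it. *)

From HB Require Import structures.
From mathcomp Require Import all_boot all_order.
From mathcomp Require Import all_classical.
From mathcomp Require Import topology.
Set Implicit Arguments. Unset Strict Implicit. Unset Printing Implicit Defensive.
Local Open Scope classical_set_scope.

Definition finitely_non_hausdorff {X : topologicalType} (A : set X) : Prop :=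
  A !=set0 /\
  forall (F : set X) (U : X -> set X),
    finite_set F -> F !=set0 -> F `<=` A ->
    (forall y, F y -> open (U y) /\ U y y) ->
    (\bigcap_(y in F) U y) !=set0.

Definition maximal_finitely_non_hausdorff {X : topologicalType} (A : set X) : Prop :=
  finitely_non_hausdorff A /\
  forall B : set X, finitely_non_hausdorff B -> A `<=` B -> B = A.

From mathcomp Require Import all_boot all_order all_classical topology.
Local Open Scope classical_set_scope.

(* Two points lie in a common finitely non-Hausdorff set iff they cannot be
   separated by disjoint open sets, i.e. iff they are [close]; so the union of
   the finitely non-Hausdorff sets through [x] is [close x], which is closed as
   the cluster set of the neighbourhood filter of [x].  Every finitely
   non-Hausdorff set extends to a maximal one by Zorn's lemma, because the
   defining condition only involves finite subsets, and a finite subset of the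
   union of a chain lies in one member of the chain. *)

Lemma chain_bigcup_finite_sub {T : choiceType} {C : set (set T)} {G : set T} :
  C !=set0 -> total_on C subset -> finite_set G ->
  G `<=` \bigcup_(B in C) B -> exists2 B, C B & G `<=` B.
Proof.
move=> [B0 CB0] totC /finite_fsetP[S ->{G}].
suff chain_seq (s : seq T) : [set y | y \in s] `<=` \bigcup_(B in C) B ->
  exists2 B, C B & [set y | y \in s] `<=` B by exact: chain_seq.
elim: s => [|a s IHs] sub_s; first by exists B0.
have [Ba CBa Ba_a] := sub_s a (mem_head a s).
have [Bs CBs sub_Bs] : exists2 B, C B & [set y | y \in s] `<=` B.
  by apply: IHs => y ys; apply: sub_s; rewrite /= in_cons ys orbT.
have [BsBa|BaBs] := totC _ _ CBs CBa.
- by exists Ba => // y; rewrite /= in_cons => /orP[/eqP ->|/sub_Bs/BsBa].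
- by exists Bs => // y; rewrite /= in_cons => /orP[/eqP ->|/sub_Bs]; [apply: BaBs|].
Qed.

Section FinitelyNonHausdorff.
Context {X : topologicalType}.
Implicit Types (A B : set X) (x y : X).

Lemma fnh_close A x y : finitely_non_hausdorff A -> A x -> A y -> close x y.
Proof.
move=> [_ fnhA] Ax Ay; rewrite closeEonbhs => U V [oU Ux] [oV Vy].
have [eq_yx|neq_yx] := eqVneq y x; first by rewrite eq_yx in Vy; exists x.
pose W z := if z == x then U else V.
have [w Ww] : \bigcap_(z in [set x; y]) W z !=set0.
  apply: fnhA; [exact: finite_set2|by exists x; left|by move=> z [->|->]|].
  by move=> z [->|->]; rewrite /W ?eqxx ?(negPf neq_yx).
have := Ww x (or_introl erefl); have := Ww y (or_intror erefl).
by rewrite /W eqxx (negPf neq_yx) => Vw Uw; exists w.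
Qed.

Lemma close_fnh2 x y : close x y -> finitely_non_hausdorff [set x; y].
Proof.
rewrite closeEonbhs => cxy; split; first by exists x; left.
move=> F U _ _ Fxy nbhsU.
pose Ux := if pselect (F x) is left Fx then U x else setT.
pose Uy := if pselect (F y) is left Fy then U y else setT.
have [w [Uxw Uyw]] : Ux `&` Uy !=set0.
  apply: cxy; rewrite /Ux /Uy.
  - by case: pselect => [/nbhsU|_]; [|split; [exact: openT|]].
  - by case: pselect => [/nbhsU|_]; [|split; [exact: openT|]].
exists w => z Fz; case: (Fxy z Fz) => eq_z; rewrite eq_z in Fz *.
- by move: Uxw; rewrite /Ux; case: pselect.
- by move: Uyw; rewrite /Uy; case: pselect.
Qed.

Lemma closed_close x : closed (close x).
Proof.
rewrite closeEnbhs clusterE; apply: closed_bigI => A _; exact: closed_closure.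
Qed.

Lemma bigcup_fnh_close x :
  \bigcup_(A in [set A | finitely_non_hausdorff A /\ A x]) A = close x.
Proof.
apply/seteqP; split=> [y [A [fnhA Ax] Ay]|y cxy]; first exact: fnh_close fnhA Ax Ay.
by exists [set x; y]; [split; [exact: close_fnh2|left]|right].
Qed.

Lemma chain_bigcup_fnh (C : set (set X)) :
  C !=set0 -> total_on C subset -> C `<=` finitely_non_hausdorff ->
  finitely_non_hausdorff (\bigcup_(B in C) B).
Proof.
move=> C0 totC fnhC; have [B CB] := C0.
have [[b Bb] _] := fnhC B CB; split; first by exists b, B.
move=> F U finF F0 sub_F nbhsU.
have [B' CB' FB'] := chain_bigcup_finite_sub C0 totC finF sub_F.
exact: (fnhC B' CB').2 F U finF F0 FB' nbhsU.
Qed.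

Lemma ex_maximal_fnh A0 : finitely_non_hausdorff A0 ->
  exists2 A, maximal_finitely_non_hausdorff A & A0 `<=` A.
Proof.
move=> fnhA0.
(* Zorn on the sets B with A0 `|` B finitely non-Hausdorff: the empty chain,
   whose union is set0, then stays inside the family. *)
have [|A [fnhA0A maxA]] := @Zorn_bigcup X
  [set B | finitely_non_hausdorff (A0 `|` B)].
  move=> C fnhC totC; have [->|C0] := eqVneq C set0.
    by rewrite /= bigcup_set0 setU0.
  rewrite /= -bigcupUr; last exact/set0P.
  rewrite -(bigcup_image C (setU A0) id); apply: chain_bigcup_fnh.
  - by have /set0P[B CB] := C0; exists (A0 `|` B), B.
  - by move=> _ _ [B CB <-] [B' CB' <-]; case: (totC _ _ CB CB') => sub;
      [left|right]; apply: setUS.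
  - by move=> _ [B CB <-]; exact: fnhC.
have sub_A0A B : finitely_non_hausdorff B -> A0 `|` A `<=` B -> B = A.
  move=> fnhB sub_B; apply: contrapT => neqBA; apply: (maxA B).
  - split=> [y Ay|BA]; first by apply: sub_B; right.
    by apply: neqBA; apply/seteqP; split=> // y By; apply: sub_B; right.
  - by rewrite /= setUidr // => y A0y; apply: sub_B; left.
have AE : A0 `|` A = A by apply: sub_A0A.
exists A; last by rewrite -AE; exact: subsetUl.
by split=> [|B fnhB AB]; [rewrite -AE|apply: sub_A0A => //; rewrite AE].
Qed.

End FinitelyNonHausdorff.

Theorem corollary2p16 (X : topologicalType) (x : X) :
  closed (\bigcup_(A in [set A : set X | finitely_non_hausdorff A /\ A x]) A) /\
  (\bigcup_(A in [set A : set X | finitely_non_hausdorff A /\ A x]) A) =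
  (\bigcup_(A in [set A : set X | maximal_finitely_non_hausdorff A /\ A x]) A).
Proof.
split; first by rewrite bigcup_fnh_close; exact: closed_close.
apply/seteqP; split=> y.
- move=> [A [fnhA Ax] Ay]; have [B maxB AB] := ex_maximal_fnh A fnhA.
  by exists B; [split=> //; apply: AB|apply: AB].
- by move=> [A [[fnhA _] Ax] Ay]; exists A.
Qed.
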